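(* Let $(\Gamma,\mathfrak o,\mathfrak m,\mathfrak q)$ be a quantized Brauer graph and $A_\Gamma$ the associated Brauer graph algebra, and let $d\ge3$. Then $A_\Gamma$ is $d$-homogeneous if and only if $\Gamma$ is a star with $n$ edges for some $n\ge1$ such that $n$ divides $d-1$, the multiplicity of the central vertex is $\frac{d-1}{n}$ and all other multiplicities are $1$. In this case $A_\Gamma$ is isomorphic to the symmetric Nakayama algebra $KQ/I$, where $Q$ is an oriented cycle of length $n$ and $I$ is the ideal generated by all paths of length $d$.
   Context: Let $K$ be a field. A Brauer graph $(\Gamma,\mathfrak o,\mathfrak m)$ consists of a finite connected graph $\Gamma$ with at least one edge (loops and multiple edges allowed), a multiplicity function $\mathfrak m:\Gamma_0\to\mathbb Z_{>0}$ on the vertex set $\Gamma_0$, and, for each vertex $\alpha$, a cyclic ordering $\mathfrak o$ of the edges incident with $\alpha$ (a loop at $\alpha$ occurs twice in this cyclic ordering, the two occurrences being treated as distinct). The valency $\mathrm{val}(\alpha)$ is the number of edges incident with $\alpha$, loops counted twice. An edge $t$ is the successor of $s$ at $\alpha$ if $t$ directly follows $s$ in the cyclic ordering at $\alpha$ (if $\mathrm{val}(\alpha)=1$ the unique edge is its own successor). An edge $s$ is truncated at $\alpha$ if $\mathrm{val}(\alpha)=1$, $\mathfrak m(\alpha)=1$ and $s$ is the edge at $\alpha$; $s$ is a truncated edge if it is truncated at one of its endpoints. The successor sequence of $s$ at $\alpha$ is $s=s_0,s_1,\dots,s_{\mathrm{val}(\alpha)-1}$ with $s_{i+1}$ the successor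 of $s_i$ at $\alpha$. A quantizing function $\mathfrak q$ assigns $\mathfrak q_{s,\alpha}\in K\setminus\{0\}$ to each pair $(s,\alpha)$ with $s$ incident with $\alpha$ and $s$ not truncated at either endpoint; $(\Gamma,\mathfrak o,\mathfrak m,\mathfrak q)$ is a quantized Brauer graph. The Brauer graph algebra $A_\Gamma=KQ_\Gamma/I_\Gamma$ (paths written left to right) is: if $\Gamma=\mathbb A_2$ with both multiplicities $1$, $A_\Gamma=K[x]/(x^2)$. Otherwise $Q_\Gamma$ has a vertex $v_s$ for each edge $s$, and for each vertex $\alpha$ and each occurrence of $t$ as the successor of $s$ at $\alpha$ with $s$ not truncated at $\alpha$, an arrow $v_s\to v_t$. For $s$ at $\alpha$ not truncated at $\alpha$, with successor sequence $s_0,\dots,s_{v-1}$, $v=\mathrm{val}(\alpha)$, $s_v=s_0$, let $C_{s,\alpha}=a_0a_1\cdots a_{v-1}$, where $a_r$ is the arrow for $s_{r+1}$ succeeding $s_r$ at $\alpha$. $I_\Gamma$ is generated by: type one: for each edge $s$ with endpoints $\alpha,\beta$ not truncated at either, $\mathfrak q_{s,\alpha}C_{s,\alpha}^{\mathfrak m(\alpha)}-\mathfrak q_{s,\beta}C_{s,\beta}^{\mathfrak m(\beta)}$; type two: for each edge $s$ truncated at $\alpha$ with other endpoint $\beta$, writing $C_{s,\beta}=b_0b_1\cdots b_{\mathrm{val}(\beta)-1}$, the path $C_{s,\beta}^{\mathfrak m(\beta)}b_0$; type three: each path $ab$ of length $2$ in $Q_\Gamma$ that is not a subpath of any $C_{t,\gamma}$.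 A star with $n$ edges is a tree with one central vertex joined by $n$ edges to $n$ further vertices of valency $1$ (for $n=1$ it is $\mathbb A_2$, and the ''central vertex'' is either endpoint). For $d\ge2$, $KQ/I$ is $d$-homogeneous if $I$ has a minimal generating set consisting of homogeneous elements of length exactly $d$ (path-length grading). *)

From HB Require Import structures.
From mathcomp Require Import all_boot all_order all_algebra all_fingroup.
Set Implicit Arguments. Unset Strict Implicit. Unset Printing Implicit Defensive.
Import GRing.Theory.
Local Open Scope ring_scope.

Record quiver := Quiver {
  qV : finType;
  qA : finType;
  qs : qA -> qV;
  qt : qA -> qV
}.

(* A (candidate) path: start vertex and the list of arrows, read left to right. *)
Definition qpath (Q : quiver) := (qV Q * seq (qA Q))%type.

Fixpoint wfp (Q : quiver) (v : qV Q) (s : seq (qA Q)) : bool :=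
  match s with
  | [::] => true
  | a :: s' => (qs a == v) && wfp (qt a) s'
  end.

Definition tgtp (Q : quiver) (v : qV Q) (s : seq (qA Q)) : qV Q :=
  last v (map (@qt Q) s).

Section PathAlgebra.
Variables (K : fieldType) (Q : quiver).

(* Elements of KQ are coefficient functions on paths (finitely supported,
   supported on genuine paths: see [kfin]). *)
Definition kq := qpath Q -> K.

Definition kfin (f : kq) : Prop :=
  exists s : seq (qpath Q), forall r, f r != 0 -> (r \in s) && wfp r.1 r.2.

Definition pbasis (p : qpath Q) : kq := fun r => (r == p)%:R.
Definition kadd (f g : kq) : kq := fun r => f r + g r.
Definition ksub (f g : kq) : kq := fun r => f r - g r.
Definition kscale (c : K) (f : kq) : kq := fun r => c * f r.
Definition kone : kq := fun r => (r.2 == [::])%:R.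

(* Multiplication = concatenation of paths (written left to right). *)
Definition kmul (f g : kq) : kq := fun r =>
  if wfp r.1 r.2 then
    \sum_(i < (size r.2).+1)
        f (r.1, take i r.2) * g (tgtp r.1 (take i r.2), drop i r.2)
  else 0.

Definition in_ideal (G : kq -> Prop) (x : kq) : Prop :=
  exists n (u w : 'I_n -> qpath Q) (c : 'I_n -> K) (g : 'I_n -> kq),
    (forall i, G (g i)) /\
    forall r, x r = \sum_(i < n) c i * kmul (kmul (pbasis (u i)) (g i)) (pbasis (w i)) r.

Definition homogeneous (d : nat) (f : kq) : Prop :=
  forall r, f r != 0 -> size r.2 = d.

End PathAlgebra.

(* A presentation KQ/I, where I is the ideal generated by pG. *)
Record presentation (K : fieldType) := Pres {
  pQ : quiver;
  pG : kq K pQ -> Prop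
}.
Arguments pG {K} p _.

(* KQ/I is d-homogeneous: I has a minimal generating set consisting of
   homogeneous elements of length exactly d. *)
Definition d_homogeneous (K : fieldType) (P : presentation K) (d : nat) : Prop :=
  exists G : kq K (pQ P) -> Prop,
    (forall g, G g -> kfin g /\ homogeneous d g) /\
    (forall x, in_ideal G x <-> in_ideal (pG P) x) /\
    (forall g0, G g0 -> exists x, in_ideal G x /\
        ~ in_ideal (fun g => G g /\ ~ (g =1 g0)) x).

(* K-algebra isomorphism KQ1/I1 ~= KQ2/I2, expressed through a lift
   phi : KQ1 -> KQ2 inducing a bijective unital algebra map on quotients. *)
Definition alg_iso (K : fieldType) (P1 P2 : presentation K) : Prop :=
  exists phi : kq K (pQ P1) -> kq K (pQ P2),
    (forall x y, x =1 y -> phi x =1 phi y) /\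
    (forall x, kfin x -> kfin (phi x)) /\
    (forall c x y, kfin x -> kfin y ->
        phi (kadd (kscale c x) y) =1 kadd (kscale c (phi x)) (phi y)) /\
    (forall x y, kfin x -> kfin y ->
        in_ideal (pG P2) (ksub (phi (kmul x y)) (kmul (phi x) (phi y)))) /\
    in_ideal (pG P2) (ksub (phi (@kone K (pQ P1))) (@kone K (pQ P2))) /\
    (forall x, kfin x -> (in_ideal (pG P2) (phi x) <-> in_ideal (pG P1) x)) /\
    (forall y, kfin y -> exists x, kfin x /\ in_ideal (pG P2) (ksub (phi x) y)).

(* bH = occurrences of edges at vertices ("half-edges"); a loop has two.
   hv h = the vertex of the occurrence, he h = the edge.
   bsigma h = the occurrence directly following h in the cyclic ordering at hv h. *)
Record brauer_graph := BrauerGraph {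
  bV : finType;
  bE : finType;
  bH : finType;
  hv : bH -> bV;
  he : bH -> bE;
  bsigma : {perm bH};
  mult : bV -> nat
}.

Section BrauerGraphDefs.
Variable B : brauer_graph.

Definition valency (a : bV B) : nat := #|[pred h | hv h == a]|.

Definition adjacent : rel (bV B) := fun a b =>
  [exists h, exists h', [&& he h == he h', h != h', hv h == a & hv h' == b]].

Definition bg_valid : Prop :=
  (0 < #|bE B|)%N /\
  (forall e : bE B, #|[pred h : bH B | he h == e]| = 2%N) /\
  (forall h, hv (bsigma B h) = hv h) /\
  (forall h h', hv h = hv h' -> fconnect (bsigma B) h h') /\
  (forall a : bV B, (0 < mult a)%N) /\
  (forall a b, connect adjacent a b).

(* occurrence h is truncated (its edge is truncated at hv h) *)
Definition trunc (h : bH B) : bool :=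
  (valency (hv h) == 1%N) && (mult (hv h) == 1%N).

Definition etrunc (e : bE B) : bool := [exists h, (he h == e) && trunc h].

Definition special_A2 : bool :=
  [&& #|bV B| == 2%N, #|bE B| == 1%N & [forall a : bV B, mult a == 1%N]].

Definition quant_valid (K : fieldType) (q : bE B -> bV B -> K) : Prop :=
  forall h, ~~ etrunc (he h) -> q (he h) (hv h) != 0.

(* The quiver Q_Gamma: vertices = edges; arrows = non-truncated occurrences h,
   h being the arrow v_(he h) -> v_(he (sigma h)). *)
Definition arrowBG := {h : bH B | ~~ trunc h}.

Definition QBG : quiver :=
  @Quiver (bE B) arrowBG
    (fun a => he (val a)) (fun a => he (bsigma B (val a))).

(* successor sequence starting at h, repeated: first k arrows of C_h^infty *)
Definition cycseq (h : bH B) (k : nat) : seq (bH B) :=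
  [seq iter i (bsigma B) h | i <- iota 0 k].

Definition cycpow (h : bH B) : seq (bH B) :=
  cycseq h (mult (hv h) * valency (hv h)).

Section Rel.
Variable K : fieldType.

(* basis element of the path starting at v_e with arrows (given as occurrences) s *)
Definition pathel (e : bE B) (s : seq (bH B)) : kq K QBG :=
  fun r => ((r.1 == e) && (map val r.2 == s))%:R.

Definition subpath2 (a b : arrowBG) : bool :=
  [exists h, ~~ trunc h && infix [:: val a; val b] (cycpow h)].

Definition genBG (q : bE B -> bV B -> K) (x : kq K QBG) : Prop :=
  (exists h h', [/\ he h = he h', h <> h', ~~ etrunc (he h) &
     x =1 ksub (kscale (q (he h) (hv h)) (pathel (he h) (cycpow h)))
               (kscale (q (he h') (hv h')) (pathel (he h') (cycpow h')))]) \/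
  (exists h h', [/\ he h = he h', h <> h', trunc h &
     x =1 pathel (he h') (cycseq h' (mult (hv h') * valency (hv h') + 1))]) \/
  (exists a b : arrowBG, [/\ he (bsigma B (val a)) = he (val b), ~~ subpath2 a b &
     x =1 pathel (he (val a)) [:: val a; val b]]).

End Rel.

Definition is_star (n : nat) (c : bV B) : Prop :=
  #|bV B| = n.+1 /\ #|bE B| = n /\
  (forall e, exists h h', [/\ he h = e, he h' = e, hv h = c & hv h' <> c]) /\
  (forall a, a <> c -> valency a = 1%N).

End BrauerGraphDefs.

Definition loopQ : quiver :=
  @Quiver unit unit (fun _ => tt) (fun _ => tt).

Definition loop_pres (K : fieldType) : presentation K :=
  @Pres K loopQ (fun x => x =1 @pbasis K loopQ (tt, [:: tt; tt])).

Definition BGpres (K : fieldType) (B : brauer_graph) (q : bE B -> bV B -> K)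
  : presentation K :=
  if special_A2 B then loop_pres K else @Pres K (QBG B) (genBG q).

Definition cycQ (n : nat) : quiver :=
  @Quiver 'I_n 'I_n (fun i => i) (fun i => ordS i).

Definition nakayama (K : fieldType) (n d : nat) : presentation K :=
  @Pres K (cycQ n) (fun x => exists p : qpath (cycQ n),
     [/\ wfp p.1 p.2, size p.2 = d & x =1 @pbasis K (cycQ n) p]).

(* First, general facts
   about ideals of path algebras: an ideal generated in length >= L has no
   nonzero coefficient on shorter paths, and distinct paths of one length form
   an irredundant generating set.  Next, the combinatorics of Brauer graphs in
   terms of occurrences of edges, their mates and successor sequences, leading
   to the notion of a star configuration, whose only relations are the paths
   C^m(c) b_0 of length m(c) val(c) + 1.  Forward direction: homogeneity in
   length d >= 3 rules out the length-two relations, which forces every edge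
   to be truncated, hence (by connectivity) Gamma to be a star, and comparing
   lengths gives d = m(c) n + 1.  Converse: the relations of such a star are
   distinct paths of length d, and relabelling along the identification of
   Q_Gamma with the oriented n-cycle gives the Nakayama algebra.  The case
   Gamma = A_2 with multiplicities one (A_Gamma = K[x]/(x^2)) is excluded
   because x^2 has length 2 < d. *)

From HB Require Import structures.
From mathcomp Require Import all_boot all_order all_algebra all_fingroup.
From mathcomp Require Import zify.
Set Implicit Arguments. Unset Strict Implicit. Unset Printing Implicit Defensive.
Import GRing.Theory.


Section PathAlgebraIdeals.
Variables (K : fieldType) (Q : quiver).
Implicit Types (f g x : kq K Q) (r : qpath Q) (G : kq K Q -> Prop).
Local Open Scope ring_scope.

Lemma nonzero_summand (n : nat) (F : 'I_n -> K) :
  \sum_(i < n) F i != 0 -> exists i, F i != 0.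
Proof.
move=> Hsum; apply/existsP; apply: contraR Hsum => /existsPn F0.
by rewrite big1 // => i _; apply/eqP; move: (F0 i); rewrite negbK.
Qed.

Lemma kmul_trivial_l f r : wfp r.1 r.2 -> kmul (pbasis K (r.1, [::])) f r = f r.
Proof.
case: r => v s /= w; rewrite /kmul /= w big_ord_recl /= take0 drop0.
rewrite /pbasis eqxx mul1r big1 ?addr0 // => i _.
have : (0 < size (take (bump 0 i) s))%N.
  by rewrite size_take; case: ifP => //; case: (size s) i => [[]|].
by case: (take _ s) => //= a l _; rewrite xpair_eqE andbF mul0r.
Qed.

Lemma kmul_trivial_r f r :
  wfp r.1 r.2 -> kmul f (pbasis K (tgtp r.1 r.2, [::])) r = f r.
Proof.
case: r => v s /= w; rewrite /kmul /= w big_ord_recr /= take_size drop_size.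
rewrite /pbasis /tgtp eqxx mulr1 big1 ?add0r // => i _.
have : (0 < size (drop i s))%N by rewrite size_drop subn_gt0 ltn_ord.
by case: (drop i s) => //= a l _; rewrite xpair_eqE andbF mulr0.
Qed.

Lemma kmul_ext f1 f2 g1 g2 : f1 =1 f2 -> g1 =1 g2 -> kmul f1 g1 =1 kmul f2 g2.
Proof.
by move=> Ef Eg r; rewrite /kmul; case: ifP => // _; apply: eq_bigr => i _; rewrite Ef Eg.
Qed.

Lemma in_ideal_zero G x : (forall r, x r = 0) -> in_ideal G x.
Proof.
move=> x0; have f : 'I_0 -> qpath Q by case.
exists 0%N, f, f, (fun _ => 0), (fun _ => x).
by split => [[] //|r]; rewrite x0 big_ord0.
Qed.

Lemma in_ideal_ext G x y : x =1 y -> in_ideal G x -> in_ideal G y.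
Proof.
move=> Exy [n [u [w [c [g [Gg Hx]]]]]]; exists n, u, w, c, g.
by split => // r; rewrite -Exy Hx.
Qed.

(* A generator agrees, at any genuine path r, with an element of the ideal:
   multiply it by the trivial paths at the ends of r. *)
Lemma generator_in_ideal G g r : G g -> wfp r.1 r.2 ->
  exists x, in_ideal G x /\ x r = g r.
Proof.
move=> Gg w; pose e1 : qpath Q := (r.1, [::]); pose e2 : qpath Q := (tgtp r.1 r.2, [::]).
exists (fun r' => \sum_(i < 1) 1 * kmul (kmul (pbasis K e1) g) (pbasis K e2) r').
split; last by rewrite big_ord1 mul1r kmul_trivial_r // kmul_trivial_l.
by exists 1%N, (fun _ => e1), (fun _ => e2), (fun _ => 1), (fun _ => g).
Qed.

(* A nonzero coefficient of an ideal element at r comes from a nonzero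
   coefficient of some generator at a subpath of r. *)
Lemma ideal_support G x r : in_ideal G x -> x r != 0 ->
  exists g j k, G g /\
    g (tgtp r.1 (take k (take j r.2)), drop k (take j r.2)) != 0.
Proof.
case=> n [u [w [c [g [Gg ->]]]]] /nonzero_summand [i].
rewrite mulf_eq0 negb_or => /andP [_]; rewrite {1}/kmul.
case: ifP => _; last by rewrite eqxx.
move/nonzero_summand => [j]; rewrite mulf_eq0 negb_or => /andP [+ _].
rewrite /kmul /=; case: ifP => _; last by rewrite eqxx.
move/nonzero_summand => [k]; rewrite mulf_eq0 negb_or => /andP [_ gnz].
by exists (g i), j, k.
Qed.

Lemma ideal_min_length G (L : nat) x r :
  (forall g, G g -> forall r, g r != 0 -> (L <= size r.2)%N) ->
  in_ideal G x -> x r != 0 -> (L <= size r.2)%N.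
Proof.
move=> GL Hx xr; have [g [j [k [Gg gnz]]]] := ideal_support Hx xr.
apply: leq_trans (GL g Gg _ gnz) _; rewrite /= size_drop size_take.
by apply: leq_trans (leq_subr _ _) _; case: ifP => // /ltnW.
Qed.

(* If every generator vanishes at r and is supported on paths at least as
   long as r, then the whole ideal vanishes at r: the only subpath of r of
   length at least size r is r itself. *)
Lemma ideal_vanishes_at G x r :
  (forall g, G g -> g r = 0 /\ forall r', g r' != 0 -> (size r.2 <= size r'.2)%N) ->
  in_ideal G x -> x r = 0.
Proof.
move=> Gr Hx; apply/eqP; apply: contraT => xr.
have [g [j [k [Gg gnz]]]] := ideal_support Hx xr.
have [gr0 long] := Gr g Gg; have := long _ gnz; rewrite /= size_drop size_take.
case: (ltnP j (size r.2)) => Hj.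
  by move/(leq_trans)/(_ (leq_subr _ _)); rewrite leqNgt Hj.
case: k gnz => [|k] gnz.
  by move: gnz; rewrite (take_oversize Hj) drop0 take0 /tgtp -surjective_pairing gr0 eqxx.
case: r {Gr Hx xr} gr0 long Hj gnz => v [|a s] /= gr0 _ Hj gnz; last lia.
by move: gnz; rewrite /tgtp /= gr0 eqxx.
Qed.

Lemma kfin_path f p : f =1 pbasis K p -> wfp p.1 p.2 -> kfin f.
Proof.
move=> Ef wp; exists [:: p] => r; rewrite Ef /pbasis.
by case: (eqVneq r p) => [->|]; rewrite ?eqxx ?mem_head.
Qed.

Lemma homogeneous_path f p : f =1 pbasis K p -> homogeneous (size p.2) f.
Proof. by move=> Ef r; rewrite Ef /pbasis; case: (eqVneq r p) => [->|]; rewrite ?eqxx. Qed.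

(* A set of generators consisting of distinct paths of one length L is
   irredundant: the path p of a generator g0 is not reached by the ideal of
   the other generators, which vanish at p and have no proper subpath there. *)
Lemma path_generator_irredundant G (L : nat) g0 p :
  (forall g, G g -> exists r, size r.2 = L /\ g =1 pbasis K r) ->
  G g0 -> g0 =1 pbasis K p -> wfp p.1 p.2 ->
  exists x, in_ideal G x /\ ~ in_ideal (fun g => G g /\ ~ g =1 g0) x.
Proof.
move=> paths Gg0 Eg0 wp; have [x [Ix xp]] := generator_in_ideal Gg0 wp.
exists x; split => // Ix'.
have size_p : size p.2 = L.
  have [r [<- Er]] := paths g0 Gg0; have := Er p; rewrite Eg0 /pbasis eqxx.
  by case: (eqVneq p r) => [->|_ /eqP]; rewrite ?oner_eq0.
suff : x p = 0 by rewrite xp Eg0 /pbasis eqxx => /eqP; rewrite oner_eq0.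
apply: (ideal_vanishes_at _ Ix') => g [Gg ng]; have [r [size_r Eg]] := paths g Gg; split.
  rewrite Eg /pbasis; case: (eqVneq p r) => [E|]; last by [].
  by case: ng => r'; rewrite Eg Eg0 E.
by move=> r'; rewrite Eg /pbasis size_p; case: (eqVneq r' r) => [->|]; rewrite ?size_r ?eqxx.
Qed.

End PathAlgebraIdeals.

Definition mate (B : brauer_graph) (h : bH B) : bH B :=
  odflt h [pick h' | (he h' == he h) && (h' != h)].

Definition truncated_vertex (B : brauer_graph) (a : bV B) : bool :=
  (valency a == 1%N) && (mult a == 1%N).

Section Occurrences.
Variable B : brauer_graph.
Hypothesis edge_two : forall e : bE B, #|[pred h : bH B | he h == e]| = 2%N.
Implicit Types (h : bH B) (a : bV B) (e : bE B).

Lemma card_other_occurrences h :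
  #|[pred h' | (he h' == he h) && (h' != h)]| = 1%N.
Proof.
have := cardD1 h [pred h' : bH B | he h' == he h].
rewrite edge_two inE eqxx add1n => /eqP; rewrite eqSS => /eqP ->.
by apply: eq_card => h'; rewrite !inE andbC.
Qed.

Lemma mate_spec h : (he (mate h) == he h) && (mate h != h).
Proof.
rewrite /mate; case: pickP => [m //|none].
have /eqP/card1P [m Hm] := card_other_occurrences h.
by have := Hm m; rewrite !inE eqxx none.
Qed.

Lemma mate_edge h : he (mate h) = he h.
Proof. by case/andP: (mate_spec h) => /eqP. Qed.

Lemma mate_neq h : mate h != h.
Proof. by case/andP: (mate_spec h). Qed.

Lemma mate_uniq h h' : he h' = he h -> h' != h -> h' = mate h.
Proof.
move=> E N; have /eqP/card1P [m Hm] := card_other_occurrences h.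
have /andP [/eqP Em Nm] := mate_spec h.
have := Hm h'; have := Hm (mate h); rewrite !inE E Em eqxx N Nm.
by move=> /esym/eqP -> /esym/eqP ->.
Qed.

Lemma mateK : involutive (@mate B).
Proof. by move=> h; apply/esym/mate_uniq; rewrite ?mate_edge // eq_sym mate_neq. Qed.

Lemma same_edge h h' : he h' = he h -> h' = h \/ h' = mate h.
Proof. by case: (eqVneq h' h) => [|N E]; [left|right; apply: mate_uniq]. Qed.

Lemma occurrence_of e : exists h, he h = e.
Proof.
have : (0 < #|[pred h : bH B | he h == e]|)%N by rewrite edge_two.
by case/card_gt0P => h /eqP; exists h.
Qed.

Lemma valency_one_uniq a h1 h2 : valency a = 1%N ->
  hv h1 = a -> hv h2 = a -> h1 = h2.
Proof.
move=> /eqP /card1P [h Hh] E1 E2.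
by have := Hh h1; have := Hh h2; rewrite !inE E1 E2 eqxx => /esym/eqP -> /esym/eqP ->.
Qed.

Lemma truncated_vertex_uniq a h1 h2 : truncated_vertex a ->
  hv h1 = a -> hv h2 = a -> h1 = h2.
Proof. by case/andP => /eqP val1 _; apply: valency_one_uniq. Qed.

Lemma card_occurrences : #|bH B| = (2 * #|bE B|)%N.
Proof.
rewrite -sum1_card (partition_big (@he B) predT) //= -[#|bE B|]sum1_card mulnC big_distrl /=.
by apply: eq_bigr => e _; rewrite mul1n -(edge_two e) -sum1_card; apply: eq_bigl => h.
Qed.

Lemma sum_valency : #|bH B| = (\sum_(a : bV B) valency a)%N.
Proof.
rewrite -sum1_card (partition_big (@hv B) predT) //=.
by apply: eq_bigr => a _; rewrite /valency -sum1_card; apply: eq_bigl => h.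
Qed.

End Occurrences.

Section SuccessorSequences.
Variable B : brauer_graph.
Hypothesis sigma_vertex : forall h, hv (bsigma B h) = hv h.
Local Notation sigma := (bsigma B).
Implicit Types (h : bH B) (k : nat).

Lemma cycseqS h k : cycseq h k.+1 = h :: cycseq (sigma h) k.
Proof.
rewrite /cycseq /= -[1%N]addn0 iotaDl -map_comp; congr (_ :: _).
by apply: eq_map => i; rewrite /= -iterSr.
Qed.

Lemma size_cycseq h k : size (cycseq h k) = k.
Proof. by rewrite /cycseq size_map size_iota. Qed.

Lemma cycseq_vertex h k x : x \in cycseq h k -> hv x = hv h.
Proof.
elim: k h => [|k IH] h //; rewrite cycseqS inE => /orP [/eqP -> //|/IH].
by rewrite sigma_vertex.
Qed.

Lemma infix_cycseq h k x y : infix [:: x; y] (cycseq h k) -> y = sigma x.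
Proof.
elim: k h => [|k IH] h //; rewrite cycseqS infix_consl => /orP [|/IH //].
case: k {IH} => [|k]; first by rewrite prefix_cons andbF.
by rewrite cycseqS !prefix_cons => /and3P [/eqP -> /eqP -> _].
Qed.

Lemma infix_cycseq_head h k : infix [:: h; sigma h] (cycseq h k.+2).
Proof. by rewrite !cycseqS infix_consl !prefix_cons !eqxx /= prefix0s. Qed.

Lemma cycseq_nontrunc h k : ~~ trunc h -> all (fun x => ~~ trunc x) (cycseq h k).
Proof. by move=> ntr; apply/allP => x /cycseq_vertex E; rewrite /trunc E. Qed.

(* The path of Q_Gamma starting at v_(he h) that follows the first k terms of
   the successor sequence of h (meaningful when h is not truncated). *)
Definition cycpath h k : qpath (QBG B) :=
  (he h, pmap insub (cycseq h k) : seq (arrowBG B)).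

Lemma map_val_pmap_insub (s : seq (bH B)) :
  all (fun x => ~~ trunc x) s -> map val (pmap insub s : seq (arrowBG B)) = s.
Proof.
elim: s => [|x s IH] //= /andP [ntr alls].
by rewrite (insubT (fun x => ~~ trunc x) ntr) /= IH.
Qed.

Lemma size_cycpath h k : ~~ trunc h -> size (cycpath h k).2 = k.
Proof.
by move=> ntr; rewrite -(size_map val) map_val_pmap_insub ?size_cycseq ?cycseq_nontrunc.
Qed.

Lemma wfp_cycpath h k : ~~ trunc h -> wfp (cycpath h k).1 (cycpath h k).2.
Proof.
elim: k h => [|k IH] h ntr //; rewrite /cycpath cycseqS /=.
rewrite (insubT (fun x => ~~ trunc x) ntr) /= eqxx.
by apply: IH; rewrite /trunc sigma_vertex.
Qed.

Lemma pathel_cycpath (K : fieldType) h k : ~~ trunc h ->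
  pathel K (he h) (cycseq h k) =1 pbasis K (cycpath h k).
Proof.
move=> ntr [e s]; rewrite /pathel /pbasis /cycpath xpair_eqE /=.
by rewrite -(inj_eq (inj_map val_inj)) map_val_pmap_insub ?cycseq_nontrunc.
Qed.

End SuccessorSequences.

Definition star_config (B : brauer_graph) (c : bV B) : Prop :=
  [/\ ~~ truncated_vertex c, forall a, a != c -> truncated_vertex a &
      forall h, (hv (mate h) == c) = (hv h != c)].

Section Star.
Variable B : brauer_graph.
Hypothesis edge_two : forall e : bE B, #|[pred h : bH B | he h == e]| = 2%N.
Variable c : bV B.
Hypothesis star : star_config c.
Implicit Types (h : bH B) (a : bV B) (e : bE B).

Lemma trunc_star h : trunc h = (hv h != c).
Proof.
case: star => ntc leaf _; rewrite /trunc -/(truncated_vertex _).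
by case: (eqVneq (hv h) c) => [->|/leaf]; [apply/negbTE|].
Qed.

Lemma center_nontrunc h : hv h = c -> ~~ trunc h.
Proof. by rewrite trunc_star => ->; rewrite eqxx. Qed.

Lemma center_occurrence e : exists h, he h = e /\ hv h = c.
Proof.
have [h <-] := occurrence_of edge_two e; case: star => _ _ mate_c.
case: (eqVneq (hv h) c) => [hc|]; first by exists h.
by rewrite -mate_c => /eqP mc; exists (mate h); rewrite (mate_edge edge_two).
Qed.

Lemma center_occurrence_uniq h1 h2 :
  he h1 = he h2 -> hv h1 = c -> hv h2 = c -> h1 = h2.
Proof.
move=> E h1c h2c; case: (same_edge edge_two E) => // h1_mate.
by case: star => _ _ mate_c; move: (mate_c h2); rewrite -h1_mate h1c h2c !eqxx.
Qed.

Lemma edge_truncated e : etrunc e.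
Proof.
have [h [<- hc]] := center_occurrence e; apply/existsP; exists (mate h).
by case: star => _ _ mate_c; rewrite (mate_edge edge_two) eqxx trunc_star mate_c hc eqxx.
Qed.

Lemma valency_center : valency c = #|bE B|.
Proof.
have inj : {in [set h | hv h == c] &, injective (@he B)}.
  by move=> h1 h2; rewrite !inE => /eqP h1c /eqP h2c E; apply: center_occurrence_uniq.
rewrite /valency -cardsE -(card_in_imset inj) -cardsT; apply: eq_card => e.
have [h [<- hc]] := center_occurrence e; rewrite in_setT.
by apply/imsetP; exists h; rewrite ?inE ?hc.
Qed.

Lemma card_vertices_star : #|bV B| = #|bE B|.+1.
Proof.
case: star => _ leaf _; have := sum_valency B.
rewrite (card_occurrences edge_two) (bigD1 c) //= valency_center.
rewrite (eq_bigr (fun _ => 1%N)); last by move=> a /leaf /andP [/eqP].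
rewrite sum1_card cardC1 mul2n -addnn => /addnI ->.
by rewrite prednK //; apply/card_gt0P; exists c.
Qed.

Lemma star_config_is_star : is_star #|bE B| c.
Proof.
split; first exact: card_vertices_star.
case: star => _ leaf mate_c; split => //; split.
- move=> e; have [h [he_h hc]] := center_occurrence e.
  exists h, (mate h); split => //; first by rewrite (mate_edge edge_two).
  by apply/eqP; rewrite mate_c hc eqxx.
- by move=> a /eqP /leaf /andP [/eqP].
Qed.

End Star.

Lemma genBG_ext (K : fieldType) (B : brauer_graph) (q : bE B -> bV B -> K)
    (x y : kq K (QBG B)) :
  x =1 y -> genBG q x -> genBG q y.
Proof.
move=> Exy [[h [h' [E N T Hx]]]|[[h [h' [E N T Hx]]]|[a [b [E N Hx]]]]].
- by left; exists h, h'; split => // r; rewrite -Exy Hx.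
- by right; left; exists h, h'; split => // r; rewrite -Exy Hx.
- by right; right; exists a, b; split => // r; rewrite -Exy Hx.
Qed.

(* The relations of a star: since every edge is truncated and every arrow
   sits at the centre, the only relations are those of type two, namely the
   paths C^(m(c)) followed by one more arrow, all of length L. *)
Section StarRelations.
Variable B : brauer_graph.
Hypothesis edge_two : forall e : bE B, #|[pred h : bH B | he h == e]| = 2%N.
Hypothesis sigma_vertex : forall h, hv (bsigma B h) = hv h.
Variable c : bV B.
Hypothesis star : star_config c.
Hypothesis long_cycle : (2 <= mult c * valency c)%N.
Variables (K : fieldType) (q : bE B -> bV B -> K).
Local Notation sigma := (bsigma B).
Local Notation L := (mult c * valency c + 1)%N.
Implicit Types (h : bH B) (a b : arrowBG B).

Lemma arrow_center a : hv (val a) = c.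
Proof. by apply/eqP; rewrite -[_ == _]negbK -(trunc_star star) (valP a). Qed.

(* Composable arrows are successive at the centre, so there are no relations
   of type three. *)
Lemma star_composable_subpath a b : he (sigma (val a)) = he (val b) -> subpath2 a b.
Proof.
move=> E; have succ : val b = sigma (val a).
  by apply: (center_occurrence_uniq edge_two star); rewrite ?sigma_vertex ?arrow_center ?E.
apply/existsP; exists (val a); rewrite (valP a) succ /cycpow arrow_center.
by case: (mult c * valency c)%N long_cycle => [|[|k]] // _; apply: infix_cycseq_head.
Qed.

Lemma star_relation x : genBG q x ->
  exists h, hv h = c /\ x =1 pbasis K (cycpath h L).
Proof.
case=> [[h [_ [_ _ ntr _]]]|[[h [h' [E N trh Hx]]]|[a [b [E nsub _]]]]].
- by rewrite (edge_truncated edge_two star) in ntr.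
- have h'_mate : h' = mate h by apply: (mate_uniq edge_two) => //; apply/eqP/nesym.
  have h'c : hv h' = c.
    by case: star => _ _ mate_c; apply/eqP; rewrite h'_mate mate_c -(trunc_star star).
  exists h'; split => // r; rewrite Hx h'c.
  by apply: pathel_cycpath => //; apply: (center_nontrunc star).
- by rewrite star_composable_subpath in nsub.
Qed.

Lemma star_relation_cycpath h : hv h = c -> genBG q (pbasis K (cycpath h L)).
Proof.
move=> hc; right; left; exists (mate h), h; split.
- exact: (mate_edge edge_two).
- exact/eqP/(mate_neq edge_two).
- case: star => _ _ mate_c; by rewrite (trunc_star star) mate_c hc eqxx.
- move=> r; rewrite hc; symmetry.
  by apply: pathel_cycpath => //; apply: (center_nontrunc star).
Qed.

Lemma star_relation_length x r : genBG q x -> x r != 0%R -> size r.2 = L.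
Proof.
case/star_relation => h [hc Hx]; rewrite Hx /pbasis.
case: (eqVneq r (cycpath h L)) => [-> _|_]; last by rewrite eqxx.
exact/size_cycpath/(center_nontrunc star).
Qed.

End StarRelations.

Section TruncatedEdges.
Variable B : brauer_graph.
Hypothesis edge_two : forall e : bE B, #|[pred h : bH B | he h == e]| = 2%N.
Hypothesis connected : forall a b : bV B, connect (@adjacent B) a b.
Implicit Types (h : bH B) (a : bV B).

Lemma connected_invariant (P : bV B -> Prop) a0 :
  P a0 -> (forall x y, P x -> adjacent x y -> P y) -> forall a, P a.
Proof.
move=> P0 stepP a; have /connectP [p Hp ->] := connected a0 a.
by elim: p a0 P0 Hp => //= y p IH x Px /andP [xy Hp]; apply: IH (stepP _ _ Px xy) Hp.
Qed.

Lemma adjacentP x y : adjacent x y -> exists h, hv h = x /\ hv (mate h) = y.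
Proof.
case/existsP=> h /existsP [h' /and4P [/eqP E N /eqP hx /eqP hy]]; exists h.
by rewrite -(mate_uniq edge_two (esym E)) // eq_sym.
Qed.

(* An edge truncated at both ends is the whole graph. *)
Lemma isolated_edge_special h : trunc h -> trunc (mate h) -> special_A2 B.
Proof.
move=> trh trm; set l1 := hv h; set l2 := hv (mate h).
have at_ends h' : hv h' = l1 \/ hv h' = l2 -> h' = h \/ h' = mate h.
  by case=> E; [left; apply: (truncated_vertex_uniq trh)|
                 right; apply: (truncated_vertex_uniq trm)].
have ends : forall a, a = l1 \/ a = l2.
  apply: (connected_invariant (a0 := l1)); first by left.
  move=> x y Px /adjacentP [h' [hx <-]]; subst x.
  by case: (at_ends h' Px) => ->; [right|left; rewrite (mateK edge_two)].
have l12 : l1 != l2.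
  by apply/eqP => E; case/eqP: (mate_neq edge_two h); apply: (truncated_vertex_uniq trh).
apply/and3P; split.
- have -> : #|bV B| = #|pred2 l1 l2|.
    by apply: eq_card => a; rewrite !inE; case: (ends a) => ->; rewrite eqxx ?orbT.
  by rewrite card2 l12.
- apply/eqP/(@eq_card1 _ (he h)) => e; rewrite !inE; apply/idP/eqP => // _.
  have [h' <-] := occurrence_of edge_two e.
  by case: (at_ends h' (ends (hv h'))) => ->; rewrite ?(mate_edge edge_two).
- by apply/forallP => a; case: (ends a) => ->; [case/andP: trh|case/andP: trm].
Qed.

Hypothesis all_truncated : forall e : bE B, etrunc e.

Lemma truncated_end h : trunc h || trunc (mate h).
Proof.
have /existsP [h' /andP [/eqP E trh']] := all_truncated (he h).
by case: (same_edge edge_two E) => <-; rewrite trh' ?orbT.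
Qed.

(* If h is truncated but its mate is not, the graph is a star centred at the
   vertex of the mate: every vertex is either the centre or a truncated leaf
   whose only edge leads to the centre. *)
Lemma star_of_truncated_occurrence h :
  trunc h -> ~~ trunc (mate h) -> star_config (hv (mate h)).
Proof.
move=> trh ntm; set c := hv (mate h); have ntc : ~~ truncated_vertex c := ntm.
have trunc_at h' : trunc h' = truncated_vertex (hv h') by [].
have leaves : forall a, a = c \/
    truncated_vertex a /\ forall h', hv h' = a -> hv (mate h') = c.
  apply: (connected_invariant (a0 := c)); first by left.
  move=> x y [->|[trx mate_c]] /adjacentP [h' [hx <-]]; last by left; apply: mate_c.
  have trm : trunc (mate h') by move: (truncated_end h'); rewrite trunc_at hx (negbTE ntc).
  right; split => // h'' hy.
  by rewrite (truncated_vertex_uniq trm hy erefl) (mateK edge_two).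
split => // [a /eqP|h'].
  by case: (leaves a) => // [[]].
case: (eqVneq (hv h') c) => [hc|nc]; last first.
  case: (leaves (hv h')) => [E|[_ mate_c]]; first by rewrite E eqxx in nc.
  by rewrite mate_c ?eqxx.
apply/negbTE/eqP => mc; have := truncated_end h'.
by rewrite !trunc_at mc hc (negbTE ntc).
Qed.

Lemma star_of_truncated_edges :
  (0 < #|bE B|)%N -> ~~ special_A2 B -> exists c : bV B, star_config c.
Proof.
move=> /card_gt0P [e0 _] nspecial; have [h0 _] := occurrence_of edge_two e0.
have star_from h : trunc h -> exists c : bV B, star_config c.
  move=> trh; case: (boolP (trunc (mate h))) => [trm|ntm].
    by case/negP: nspecial; apply: (isolated_edge_special trh).
  by exists (hv (mate h)); apply: star_of_truncated_occurrence.
by case/orP: (truncated_end h0) => /star_from.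
Qed.

End TruncatedEdges.

Definition star_shape (B : brauer_graph) (d n : nat) (c : bV B) : Prop :=
  [/\ (0 < n)%N, is_star n c, (n %| d.-1)%N, mult c = (d.-1 %/ n)%N &
      forall a, a <> c -> mult a = 1%N].

Section Forward.
Variables (K : fieldType) (B : brauer_graph) (q : bE B -> bV B -> K) (d : nat).
Hypothesis valid : bg_valid B.
Hypothesis d_ge3 : (3 <= d)%N.
Variable G : kq K (QBG B) -> Prop.
Hypothesis G_hom : forall g, G g -> kfin g /\ homogeneous d g.
Hypothesis G_gen : forall x, in_ideal G x <-> in_ideal (genBG q) x.
Local Notation sigma := (bsigma B).

Lemma relation_length x r :
  genBG q x -> wfp r.1 r.2 -> x r != 0%R -> (d <= size r.2)%N.
Proof.
move=> gx w; have [y [Iy <-]] := generator_in_ideal gx w.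
apply: (ideal_min_length (G := G)); last exact/G_gen.
by move=> g Gg r' gr'; rewrite (proj2 (G_hom Gg) _ gr').
Qed.

(* Hence no relation of type three (of length 2) occurs. *)
Lemma homogeneous_composable_subpath (a b : arrowBG B) :
  he (sigma (val a)) = he (val b) -> subpath2 a b.
Proof.
move=> E; apply: contraT => nsub.
have rel : genBG q (pathel K (he (val a)) [:: val a; val b]).
  by right; right; exists a, b.
have := relation_length (r := (he (val a), [:: a; b])) rel.
rewrite /= eqxx E eqxx /pathel /= !eqxx => /(_ isT (oner_neq0 _)).
by rewrite leqNgt (leq_trans _ d_ge3).
Qed.

(* Every edge is truncated: an edge with two non-truncated occurrences h and
   mate h gives the composable arrows sigma^-1 h and mate h, which are not
   successive in any successor sequence. *)
Lemma homogeneous_edges_truncated (e : bE B) : etrunc e.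
Proof.
case: valid => [_ [edge_two [sigma_vertex _]]].
have [h <-] := occurrence_of edge_two e.
case: (boolP (trunc h)) => [trh|ntr]; first by apply/existsP; exists h; rewrite eqxx.
case: (boolP (trunc (mate h))) => [trm|ntm].
  by apply/existsP; exists (mate h); rewrite (mate_edge edge_two) eqxx.
pose h1 := (sigma^-1)%g h; have sigma_h1 : sigma h1 = h by rewrite permKV.
have nt1 : ~~ trunc h1 by rewrite /trunc -sigma_vertex sigma_h1.
have := @homogeneous_composable_subpath (Sub h1 nt1) (Sub (mate h) ntm).
rewrite /= sigma_h1 (mate_edge edge_two) => /(_ erefl) /existsP [h2 /andP [_]].
move/infix_cycseq; rewrite /= sigma_h1 => mate_h.
by case/eqP: (mate_neq edge_two h).
Qed.

(* The relations of a star have length L = m(c) val(c) + 1; comparing with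
   the homogeneous generators in both directions forces d = L. *)
Lemma homogeneous_star_length (c : bV B) :
  star_config c -> d = (mult c * valency c + 1)%N.
Proof.
case: valid => [/card_gt0P [e0 _] [edge_two [sigma_vertex _]]] star.
set L := (mult c * valency c + 1)%N.
have [h0 [_ h0c]] := center_occurrence edge_two star e0.
pose r0 := cycpath h0 L; have nt0 := center_nontrunc star h0c.
have w0 : wfp r0.1 r0.2 := wfp_cycpath sigma_vertex L nt0.
have rel0 := star_relation_cycpath edge_two sigma_vertex star q h0c.
have rel0_r0 : pbasis K r0 r0 != 0%R by rewrite /pbasis eqxx oner_neq0.
have d_le_L : (d <= L)%N.
  by rewrite -(size_cycpath sigma_vertex L nt0); apply: relation_length rel0 w0 _.
apply/eqP; rewrite eqn_leq d_le_L /=.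
have long_cycle : (2 <= mult c * valency c)%N by move: d_le_L; rewrite /L; lia.
(* some generator g in G is nonzero at a subpath p of r0; g has length d and,
   lying in I_Gamma, length at least L *)
have [y [Iy y_r0]] := generator_in_ideal rel0 w0.
have /G_gen IGy := Iy; rewrite -y_r0 in rel0_r0.
have [g [j [k [Gg gp]]]] := ideal_support IGy rel0_r0.
set p := (_, _) in gp; have [[s supp] hom] := G_hom Gg.
have wp : wfp p.1 p.2 by case/andP: (supp _ gp).
have [z [Iz z_p]] := generator_in_ideal Gg wp; have /G_gen Iz' := Iz.
rewrite -(hom _ gp); apply: (ideal_min_length _ Iz'); last by rewrite z_p.
move=> x gx r xr.
by rewrite (star_relation_length edge_two sigma_vertex star long_cycle gx xr).
Qed.

Lemma homogeneous_star_shape :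
  special_A2 B = false -> exists n (c : bV B), star_shape d n c.
Proof.
case: valid => [card_E [edge_two [_ [_ [_ connected]]]]] nspecial.
have [c star] := star_of_truncated_edges edge_two connected
  homogeneous_edges_truncated card_E (negbT nspecial).
have d_L := homogeneous_star_length star.
have val_c := valency_center edge_two star.
exists #|bE B|, c; split => //.
- exact: star_config_is_star.
- by rewrite d_L addn1 val_c dvdn_mull.
- by rewrite d_L addn1 val_c mulnK.
- by case: star => _ leaf _ a /eqP /leaf /andP [_ /eqP].
Qed.

End Forward.

Definition relabel_path (Q1 Q2 : quiver) (al : qV Q2 -> qV Q1)
    (be : qA Q2 -> qA Q1) (p : qpath Q2) : qpath Q1 :=
  (al p.1, map be p.2).

Definition relabel (K : fieldType) (Q1 Q2 : quiver) (al : qV Q2 -> qV Q1)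
    (be : qA Q2 -> qA Q1) (f : kq K Q1) : kq K Q2 :=
  fun r => f (relabel_path al be r).

Section RelabelMorphism.
Variables (K : fieldType) (Q1 Q2 : quiver).
Variables (al : qV Q2 -> qV Q1) (be : qA Q2 -> qA Q1).
Hypothesis al_inj : injective al.
Hypothesis be_source : forall a, qs (be a) = al (qs a).
Hypothesis be_target : forall a, qt (be a) = al (qt a).
Local Notation rl := (relabel (K := K) al be).

Lemma wfp_relabel v s : wfp (al v) (map be s) = wfp v s.
Proof. by elim: s v => [|a s IH] v //=; rewrite be_source be_target IH (inj_eq al_inj). Qed.

Lemma tgtp_relabel v s : tgtp (al v) (map be s) = al (tgtp v s).
Proof.
elim: s v => [|a s IH] v //.
by rewrite [LHS]/tgtp /= -/(tgtp _ (map be s)) be_target IH.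
Qed.

Lemma relabel_kmul f g : rl (kmul f g) =1 kmul (rl f) (rl g).
Proof.
case=> v s; rewrite /relabel /kmul /relabel_path /= wfp_relabel; case: ifP => // _.
rewrite size_map; apply: eq_bigr => i _.
by rewrite -map_take -map_drop tgtp_relabel.
Qed.

Lemma relabel_kone : rl (@kone K Q1) =1 @kone K Q2.
Proof. by case=> v [|a s]. Qed.

End RelabelMorphism.

Section RelabelIso.
Variables (K : fieldType) (Q1 Q2 : quiver).
Variables (al : qV Q2 -> qV Q1) (al' : qV Q1 -> qV Q2).
Variables (be : qA Q2 -> qA Q1) (be' : qA Q1 -> qA Q2).
Hypothesis alK : cancel al al'.
Hypothesis al'K : cancel al' al.
Hypothesis beK : cancel be be'.
Hypothesis be'K : cancel be' be.
Hypothesis be_source : forall a, qs (be a) = al (qs a).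
Hypothesis be_target : forall a, qt (be a) = al (qt a).
Local Notation rl := (relabel (K := K) al be).
Local Notation rl' := (relabel (K := K) al' be').
Local Open Scope ring_scope.

Lemma be'_source a : qs (be' a) = al' (qs a).
Proof. by rewrite -[a in RHS]be'K be_source alK. Qed.

Lemma be'_target a : qt (be' a) = al' (qt a).
Proof. by rewrite -[a in RHS]be'K be_target alK. Qed.

Lemma relabel_pathK : cancel (relabel_path al be) (relabel_path al' be').
Proof. by case=> v s; rewrite /relabel_path /= alK mapK. Qed.

Lemma relabel_pathKV : cancel (relabel_path al' be') (relabel_path al be).
Proof. by case=> v s; rewrite /relabel_path /= al'K mapK. Qed.

Lemma relabelK f : rl' (rl f) =1 f.
Proof. by move=> r; rewrite /relabel relabel_pathKV. Qed.

Lemma relabel_pbasis p : rl (pbasis K p) =1 pbasis K (relabel_path al' be' p).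
Proof.
move=> r; rewrite /relabel /pbasis; congr ((_ : bool)%:R).
by apply/eqP/eqP => [<-|->]; rewrite ?relabel_pathK ?relabel_pathKV.
Qed.

Lemma relabel_kfin f : kfin f -> kfin (rl f).
Proof.
case=> s supp; exists (map (relabel_path al' be') s) => r fr.
have /andP [r_s wr] := supp _ fr; apply/andP; split.
  by rewrite -(relabel_pathK r) map_f.
by move: wr; rewrite /= wfp_relabel //; apply: can_inj alK.
Qed.

Lemma relabel_ideal (G1 : kq K Q1 -> Prop) (G2 : kq K Q2 -> Prop) x :
  (forall g, G1 g -> G2 (rl g)) -> in_ideal G1 x -> in_ideal G2 (rl x).
Proof.
move=> G12 [m [u [w [c [g [G1g Ex]]]]]].
exists m, (fun i => relabel_path al' be' (u i)), (fun i => relabel_path al' be' (w i)), c.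
exists (fun i => rl (g i)); split => [i|r]; first exact: G12.
rewrite {1}/relabel Ex; apply: eq_bigr => i _; congr (_ * _).
have rl_kmul := relabel_kmul (K := K) (can_inj alK) be_source be_target.
rewrite -/(rl _ r) rl_kmul; apply: kmul_ext; last exact: relabel_pbasis.
by move=> r'; rewrite rl_kmul; apply: kmul_ext => // r''; apply: relabel_pbasis.
Qed.

End RelabelIso.

Section RelabelAlgIso.
Variables (K : fieldType) (Q1 Q2 : quiver).
Variables (al : qV Q2 -> qV Q1) (al' : qV Q1 -> qV Q2).
Variables (be : qA Q2 -> qA Q1) (be' : qA Q1 -> qA Q2).
Hypothesis alK : cancel al al'.
Hypothesis al'K : cancel al' al.
Hypothesis beK : cancel be be'.
Hypothesis be'K : cancel be' be.
Hypothesis be_source : forall a, qs (be a) = al (qs a).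
Hypothesis be_target : forall a, qt (be a) = al (qt a).
Local Notation rl := (relabel (K := K) al be).
Local Notation rl' := (relabel (K := K) al' be').
Local Open Scope ring_scope.

Lemma relabel_alg_iso (G1 : kq K Q1 -> Prop) (G2 : kq K Q2 -> Prop) :
  (forall g, G1 g -> G2 (rl g)) -> (forall g, G2 g -> G1 (rl' g)) ->
  alg_iso (@Pres K Q1 G1) (@Pres K Q2 G2).
Proof.
move=> G12 G21; have al_inj := can_inj alK.
have be'_src := be'_source alK be'K be_source.
have be'_tgt := be'_target alK be'K be_target.
exists rl; split; first by move=> x y Exy r; apply: Exy.
split; first exact: relabel_kfin.
split => //.
split; [|split; [|split]].
- move=> x y _ _; apply: in_ideal_zero => r.
  by rewrite /ksub (relabel_kmul al_inj be_source be_target) subrr.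
- by apply: in_ideal_zero => r; rewrite /ksub relabel_kone subrr.
- move=> x _; split; last exact: (relabel_ideal alK al'K beK be'K be_source be_target).
  move/(relabel_ideal al'K alK be'K beK be'_src be'_tgt G21).
  exact: in_ideal_ext (relabelK al'K be'K x).
- move=> y y_fin; exists (rl' y); split.
    exact: relabel_kfin al'K be'K be'_src be'_tgt _ _.
  by apply: in_ideal_zero => r; rewrite /ksub (relabelK alK beK) subrr.
Qed.

End RelabelAlgIso.

(* The quiver of a star with n edges is the oriented cycle of length n: its
   arrows are the occurrences at the centre, which sigma permutes cyclically,
   so numbering them along the orbit of one of them, h0, identifies both the
   arrows and the vertices (edges) of Q_Gamma with 'I_n. *)
Section StarCycle.
Variable B : brauer_graph.
Hypothesis edge_two : forall e : bE B, #|[pred h : bH B | he h == e]| = 2%N.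
Hypothesis sigma_vertex : forall h, hv (bsigma B h) = hv h.
Hypothesis sigma_transitive : forall h h', hv h = hv h' -> fconnect (bsigma B) h h'.
Variables (c : bV B) (n : nat).
Hypothesis star : star_config c.
Hypothesis card_E : #|bE B| = n.
Variable h0 : bH B.
Hypothesis h0c : hv h0 = c.
Local Notation sigma := (bsigma B).

Definition center_occ (i : nat) : bH B := iter i sigma h0.

Lemma center_occ_vertex i : hv (center_occ i) = c.
Proof. by elim: i => [|i IH] //; rewrite /center_occ iterS sigma_vertex. Qed.

Lemma orbit_center h : fconnect sigma h0 h = (hv h == c).
Proof.
apply/idP/eqP => [/iter_findex <-|hc]; first exact: center_occ_vertex.
by apply: sigma_transitive; rewrite h0c hc.
Qed.

Lemma order_center : fingraph.order sigma h0 = n.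
Proof.
rewrite /fingraph.order -card_E -(valency_center edge_two star).
by apply: eq_card => h; rewrite !inE orbit_center.
Qed.

Lemma center_occ_succ (i : 'I_n) : sigma (center_occ i) = center_occ (ordS i).
Proof.
rewrite /center_occ -iterS /=; case: (ltngtP i.+1 n) => [lt|gt|eq].
- by rewrite modn_small.
- by move: (ltn_ord i); lia.
- have -> : (i.+1 %% n = 0)%N by rewrite eq modnn.
  by rewrite -iterS eq -[X in iter X]order_center iter_order //; apply: perm_inj.
Qed.

Lemma findex_center_occ (i : 'I_n) : findex sigma h0 (center_occ i) = i.
Proof. by apply: findex_iter; rewrite order_center. Qed.

Lemma center_index_lt h : hv h = c -> (findex sigma h0 h < n)%N.
Proof. by move=> hc; rewrite -order_center findex_max // orbit_center hc. Qed.

Lemma center_occ_findex h : hv h = c -> center_occ (findex sigma h0 h) = h.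
Proof. by move=> hc; apply: iter_findex; rewrite orbit_center hc. Qed.

Definition center_end (e : bE B) : bH B :=
  odflt h0 [pick h | (he h == e) && (hv h == c)].

Lemma center_endP e : he (center_end e) = e /\ hv (center_end e) = c.
Proof.
rewrite /center_end; case: pickP => [h /andP [/eqP ? /eqP ?] //|none].
have [h [he_h hc]] := center_occurrence edge_two star e.
by move: (none h); rewrite he_h hc !eqxx.
Qed.

Definition edge_at (i : qV (cycQ n)) : qV (QBG B) := he (center_occ i).

Definition edge_index (e : qV (QBG B)) : qV (cycQ n) :=
  Ordinal (center_index_lt (proj2 (center_endP e))).

Definition arrow_at (i : qA (cycQ n)) : qA (QBG B) :=
  Sub (center_occ i) (center_nontrunc star (center_occ_vertex i)).

Definition arrow_index (a : qA (QBG B)) : qA (cycQ n) :=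
  Ordinal (center_index_lt (arrow_center star a)).

Lemma edge_atK : cancel edge_at edge_index.
Proof.
move=> i; apply: val_inj; rewrite /= -[RHS]findex_center_occ; congr findex.
have [he_end end_c] := center_endP (edge_at i).
by apply: (center_occurrence_uniq edge_two star) => //; apply: center_occ_vertex.
Qed.

Lemma edge_indexK : cancel edge_index edge_at.
Proof.
move=> e; have [he_end end_c] := center_endP e.
by rewrite /edge_at /= center_occ_findex.
Qed.

Lemma arrow_atK : cancel arrow_at arrow_index.
Proof. by move=> i; apply: val_inj; apply: findex_center_occ. Qed.

Lemma arrow_indexK : cancel arrow_index arrow_at.
Proof. by move=> a; apply: val_inj; apply: center_occ_findex (arrow_center star a). Qed.

Lemma arrow_at_source i : qs (arrow_at i) = edge_at (qs i).
Proof. by []. Qed.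

Lemma arrow_at_target i : qt (arrow_at i) = edge_at (qt i).
Proof. by rewrite /= center_occ_succ. Qed.

Lemma cycle_path_relabel (p : qpath (cycQ n)) : wfp p.1 p.2 ->
  relabel_path edge_at arrow_at p = cycpath (center_occ p.1) (size p.2).
Proof.
case: p => v s /= ws; rewrite /relabel_path /cycpath; congr (_, _).
apply: (inj_map val_inj); rewrite map_val_pmap_insub; last first.
  exact/cycseq_nontrunc/(center_nontrunc star)/center_occ_vertex.
rewrite -map_comp; elim: s v ws => [|a s IH] v //= /andP [/eqP <- ws].
by rewrite cycseqS center_occ_succ (IH _ ws).
Qed.

Hypothesis long_cycle : (2 <= mult c * valency c)%N.
Variables (K : fieldType) (q : bE B -> bV B -> K).
Local Notation L := (mult c * valency c + 1)%N.

Lemma star_relation_to_cycle g :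
  genBG q g -> pG (nakayama K n L) (relabel edge_at arrow_at g).
Proof.
case/(star_relation edge_two sigma_vertex star long_cycle) => h [hc Eg].
have nth := center_nontrunc star hc.
exists (relabel_path edge_index arrow_index (cycpath h L)); split.
- rewrite /= (wfp_relabel (can_inj edge_indexK)) ?wfp_cycpath //.
    exact: be'_source edge_atK arrow_indexK arrow_at_source.
  exact: be'_target edge_atK arrow_indexK arrow_at_target.
- by rewrite /= size_map size_cycpath.
- move=> r; rewrite -(relabel_pbasis K edge_atK edge_indexK arrow_atK arrow_indexK).
  exact: Eg.
Qed.

Lemma cycle_to_star_relation g :
  pG (nakayama K n L) g -> genBG q (relabel edge_index arrow_index g).
Proof.
case=> p [wp size_p Eg].
apply: (genBG_ext (x := pbasis K (cycpath (center_occ p.1) L))).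
  move=> r; rewrite -size_p -(cycle_path_relabel wp).
  by rewrite -(relabel_pbasis K edge_indexK edge_atK arrow_indexK arrow_atK) /relabel Eg.
exact/(star_relation_cycpath edge_two sigma_vertex star)/center_occ_vertex.
Qed.

Lemma star_cycle_alg_iso : alg_iso (@Pres K (QBG B) (genBG q)) (nakayama K n L).
Proof.
suff : alg_iso (@Pres K (QBG B) (genBG q)) (@Pres K (cycQ n) (pG (nakayama K n L))) by [].
apply: (relabel_alg_iso edge_atK edge_indexK arrow_atK arrow_indexK
  arrow_at_source arrow_at_target).
- exact: star_relation_to_cycle.
- exact: cycle_to_star_relation.
Qed.

End StarCycle.

Section Reverse.
Variables (B : brauer_graph) (d n : nat) (c : bV B).
Hypothesis valid : bg_valid B.
Hypothesis d_ge3 : (3 <= d)%N.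
Hypothesis shape : star_shape d n c.

Lemma shape_star_config : star_config c.
Proof.
case: valid => [_ [edge_two _]].
case: shape => n_pos [_ [card_E [ends leaves]]] n_dvd mult_c mult_a; split.
- (* if c were truncated, n = d - 1 >= 2 edges would meet at c only once *)
  apply/negP; case/andP=> /eqP val1 /eqP m1.
  have : (1 < #|bE B|)%N by rewrite card_E -[n]mul1n -m1 mult_c divnK //; lia.
  case/card_gt1P=> e1 [e2 [_ _ /eqP[]]].
  have [h1 [_ [<- _ h1c _]]] := ends e1; have [h2 [_ [<- _ h2c _]]] := ends e2.
  by rewrite (valency_one_uniq val1 h1c h2c).
- by move=> a /eqP na; rewrite /truncated_vertex leaves // mult_a.
- move=> h; have [h1 [h2 [E1 E2 h1c h2c]]] := ends (he h).
  have h21 : h2 != h1 by apply/eqP => E; apply: h2c; rewrite E.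
  case: (same_edge edge_two E1) => [h1h|h1m].
    have -> : mate h = h2 by apply/esym/mate_uniq; rewrite // -h1h ?E2 ?E1.
    by rewrite -h1h h1c eqxx; apply/negbTE/eqP.
  have h2h : h2 = h.
    case: (same_edge edge_two E2) => // h2m; by rewrite h2m -h1m eqxx in h21.
  by rewrite -h1m h1c eqxx -h2h; apply/esym/eqP.
Qed.

Lemma shape_length : (mult c * valency c + 1)%N = d.
Proof.
case: valid => [_ [edge_two _]]; case: shape => _ [_ [card_E _]] n_dvd mult_c _.
rewrite (valency_center edge_two shape_star_config) card_E mult_c divnK //; lia.
Qed.

Lemma shape_not_special : special_A2 B = false.
Proof.
case: valid => [_ [edge_two _]]; have [ntc _ _] := shape_star_config.
apply/negP => /and3P [_ /eqP E1 /forallP mult1]; case/negP: ntc.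
by rewrite /truncated_vertex (valency_center edge_two shape_star_config) E1 mult1.
Qed.

Lemma shape_homogeneous (K : fieldType) (q : bE B -> bV B -> K) :
  d_homogeneous (@Pres K (QBG B) (genBG q)) d.
Proof.
case: valid => [_ [edge_two [sigma_vertex _]]]; have star := shape_star_config.
have long_cycle : (2 <= mult c * valency c)%N by move: shape_length; lia.
have path_relation x : genBG q x ->
    exists h, [/\ ~~ trunc h, size (cycpath h d).2 = d & x =1 pbasis K (cycpath h d)].
  case/(star_relation edge_two sigma_vertex star long_cycle) => h [hc Ex].
  have nth := center_nontrunc star hc; rewrite shape_length in Ex.
  by exists h; rewrite size_cycpath.
exists (genBG q); split; [move=> g gg|split => // g0 gg0].
  have [h [nth size_h Eg]] := path_relation g gg.
  split; first by apply: kfin_path Eg _; apply: wfp_cycpath.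
  by rewrite -size_h; apply: homogeneous_path.
have [h0 [nth0 _ Eg0]] := path_relation g0 gg0.
apply: (path_generator_irredundant (L := d)) gg0 Eg0 (wfp_cycpath sigma_vertex d nth0).
by move=> g gg; have [h [_ size_h Eg]] := path_relation g gg; exists (cycpath h d).
Qed.

Lemma shape_alg_iso (K : fieldType) (q : bE B -> bV B -> K) :
  alg_iso (@Pres K (QBG B) (genBG q)) (nakayama K n d).
Proof.
case: valid => [/card_gt0P [e0 _] [edge_two [sigma_vertex [sigma_transitive _]]]].
have star := shape_star_config; have [_ [_ [card_E _]] _ _ _] := shape.
have [h0 [_ h0c]] := center_occurrence edge_two star e0.
have long_cycle : (2 <= mult c * valency c)%N by move: shape_length; lia.
rewrite -shape_length.
exact: (star_cycle_alg_iso edge_two sigma_vertex sigma_transitive star card_E h0c long_cycle).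
Qed.

End Reverse.

(* K[x]/(x^2) is not d-homogeneous for d >= 3: its relation x^2 has
   length 2, while an ideal generated in length d has nothing shorter. *)
Lemma loop_not_homogeneous (K : fieldType) (d : nat) :
  (3 <= d)%N -> ~ d_homogeneous (loop_pres K) d.
Proof.
move=> d_ge3 [G [G_hom [G_gen _]]].
pose r : qpath loopQ := (tt, [:: tt; tt]).
have [y [Iy yr]] :=
  generator_in_ideal (G := pG (loop_pres K)) (frefl (pbasis K r)) (isT : wfp r.1 r.2).
have /G_gen IGy := Iy; suff : (d <= size r.2)%N by rewrite leqNgt (leq_trans _ d_ge3).
apply: (ideal_min_length _ IGy); last by rewrite yr /pbasis eqxx oner_neq0.
by move=> g Gg r' gr'; rewrite (proj2 (G_hom g Gg) _ gr').
Qed.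

Theorem proposition2p3 (K : fieldType) (B : brauer_graph)
    (q : bE B -> bV B -> K) (d : nat) :
  bg_valid B -> quant_valid q -> (3 <= d)%N ->
  (d_homogeneous (BGpres q) d <->
     exists (n : nat) (c : bV B),
       [/\ (0 < n)%N, is_star n c, (n %| d.-1)%N, mult c = (d.-1 %/ n)%N &
           forall a, a <> c -> mult a = 1%N]) /\
  (forall (n : nat) (c : bV B),
       (0 < n)%N -> is_star n c -> (n %| d.-1)%N -> mult c = (d.-1 %/ n)%N ->
       (forall a, a <> c -> mult a = 1%N) ->
     alg_iso (BGpres q) (nakayama K n d)).
Proof.
move=> valid _ d_ge3; split; first split.
- rewrite /BGpres; case: ifP => [_ /(loop_not_homogeneous d_ge3) //|nspecial].
  case=> G [G_hom [G_gen _]].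
  exact: (homogeneous_star_shape valid d_ge3 G_hom G_gen nspecial).
- case=> n [c shape]; rewrite /BGpres (shape_not_special valid d_ge3 shape).
  exact: (shape_homogeneous valid d_ge3 shape).
- move=> n c n_pos is_star_c n_dvd mult_c mult_a.
  have shape : star_shape d n c by [].
  rewrite /BGpres (shape_not_special valid d_ge3 shape).
  exact: (shape_alg_iso valid d_ge3 shape).
Qed.
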